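(* In the publication model, in the linear rational expectations equilibrium $P=\theta+b\varepsilon+c$ with $\varepsilon=\xi_j$, $b=\frac{\sigma_x^3}{\sigma_x^2+\sigma_y^2}$ and constant $c$, the publishing trader $j$, who knows $x_j=\theta+\sigma_x\varepsilon$ and $P$, can infer $\theta$ exactly: $\theta=\frac{\sigma_x(P-c)-b\,x_j}{\sigma_x-b}$ (note $\sigma_x-b=\frac{\sigma_x\sigma_y^2}{\sigma_x^2+\sigma_y^2}>0$), so that $\mathrm{Var}(\theta\mid x_j,P)=0$ and his demand is $k_j=\frac{\theta-P}{\gamma\sigma_\eta^2}$. In contrast, every other trader $i$ has $\mathrm{Var}(\theta\mid x_i,y_i,P)>0$. Hence trader $j$ gains an informational advantage over all other traders.
   Context: Baseline model. An asset is in aggregate supply $K>0$ and pays $\tilde\theta=\theta+\eta$, where $\eta\sim\mathcal N(0,\sigma_\eta^2)$, $\sigma_\eta>0$, is independent of everything else. A continuum of agents $i\in[0,1]$ hold a uniform (improper, uninformative) prior on $\theta$, so posteriors about $\theta$ are the Gaussian (generalized least squares) posteriors determined by the signals alone. Each agent $i$ observes a private signal $x_i=\theta+\sigma_x\xi_i$, $\sigma_x>0$, with $\xi_i\sim\mathcal N(0,1)$ i.i.d. across agents and independent of $\theta,\eta$. Agents have CARA utility $-E[e^{-\gamma k_i(\tilde\theta-P)}\mid \mathcal I_i]$ with $\gamma>0$ and information $\mathcal I_i$ (which includes the price $P$), so demand is $k_i=\frac{E[\tilde\theta\mid \mathcal I_i]-P}{\gamma\,\mathrm{Var}(\tilde\theta\mid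 \mathcal I_i)}$; the market clears when $\int_0^1k_i\,di=K$. Law-of-large-numbers convention: integrals over $i$ of idiosyncratic noise terms vanish. Publication model: a single trader $j$ publishes $x_j$; every other agent $i$ has information $\mathcal I_i=(x_i,y_i,P)$ with $y_i=x_j+\sigma_y\tau_i=\theta+\sigma_x\xi_j+\sigma_y\tau_i$, $\tau_i\sim\mathcal N(0,1)$ i.i.d., $\sigma_y>0$, independent of all other variables. Writing $\varepsilon:=\xi_j$, a linear rational expectations equilibrium is a triple $(a,b,c)$, $a\neq0$, such that when agents take $P=a\theta+b\varepsilon+c$ and form Bayesian posteriors, market clearing holds for every realization of $(\theta,\varepsilon)$ exactly at that price. Trader $j$ has measure zero, so his own demand does not affect the market-clearing price; trader $j$'s information is $\mathcal I_j=(x_j,P)$. *)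

From HB Require Import structures.
From mathcomp Require Import all_boot all_order all_algebra.
Set Implicit Arguments. Unset Strict Implicit. Unset Printing Implicit Defensive.
Import Order.TTheory GRing.Theory Num.Theory.
Local Open Scope ring_scope.

(* Linear-Gaussian signal model for an agent with an (improper) flat prior on
   theta: the agent observes the vector s : 'I_n -> R with
      s k = h k * theta + d k + \sum_l A k l * z l,
   where z : 'I_m are independent standard normal shocks (independent of theta).
   Under the uninformative prior the posterior of theta is the Gaussian
   generalized-least-squares posterior: its mean is w^T (s - d) and its
   variance is w^T A A^T w, where w is a best linear unbiased (GLS) weight
   vector, i.e. w minimizes w^T A A^T w subject to w^T h = 1. *)
Section GLS.
Variable R : realFieldType.

Definition unbiased n (h : 'I_n -> R) (w : 'I_n -> R) : Prop :=
  \sum_(k < n) w k * h k = 1.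

Definition lin_var n m (A : 'I_n -> 'I_m -> R) (w : 'I_n -> R) : R :=
  \sum_(l < m) (\sum_(k < n) w k * A k l) ^+ 2.

Definition gls_weight n m (h : 'I_n -> R) (A : 'I_n -> 'I_m -> R)
  (w : 'I_n -> R) : Prop :=
  unbiased h w /\ forall w', unbiased h w' -> lin_var A w <= lin_var A w'.

Definition post_var n m (h : 'I_n -> R) (A : 'I_n -> 'I_m -> R) (v : R) : Prop :=
  exists w, gls_weight h A w /\ v = lin_var A w.

Definition post_mean n m (h : 'I_n -> R) (A : 'I_n -> 'I_m -> R)
  (d s : 'I_n -> R) (mu : R) : Prop :=
  exists w, gls_weight h A w /\ mu = \sum_(k < n) w k * (s k - d k).

(* CARA demand: payoff theta~ = theta + eta with eta ~ N(0, sigma_eta^2)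
   independent, so E[theta~|I] = mu and Var(theta~|I) = v + sigma_eta^2. *)
Definition cara_demand (gamma sigma_eta mu v P : R) : R :=
  (mu - P) / (gamma * (v + sigma_eta ^+ 2)).

Definition vec n (l : seq R) : 'I_n -> R := fun k => nth 0 l k.
Definition mat n m (l : seq (seq R)) : 'I_n -> 'I_m -> R :=
  fun k j => nth 0 (nth [::] l k) j.

End GLS.

From mathcomp Require Import all_boot all_order all_algebra.
From mathcomp Require Import ring.
Import Order.TTheory GRing.Theory Num.Theory.
Local Open Scope ring_scope.

(* Trader j sees (x_j, P), two signals driven by the single shock eps; the
   combination sx * P - b * x_j cancels eps, so a GLS weight with zero noise
   exists and the posterior of theta is degenerate at the truth.  Trader i
   carries the additional independent shocks xi_i and tau_i: a weight with
   zero noise loading would have to ignore x_i and y_i, and then P alone still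
   loads on eps with coefficient b > 0, so every unbiased weight has positive
   variance.  The GLS weight of trader i is (t, -t, 1), which is verified
   through the normal equations A A^T w = lambda h. *)

Section GLSTheory.
Context {R : realFieldType} {n m : nat} {h : 'I_n -> R} {A : 'I_n -> 'I_m -> R}.

Definition loading (w : 'I_n -> R) (l : 'I_m) : R := \sum_(k < n) w k * A k l.

Lemma lin_var_ge0 w : 0 <= lin_var A w.
Proof. by apply: sumr_ge0 => l _; apply: sqr_ge0. Qed.

Lemma loading_of_lin_var_eq0 w : lin_var A w = 0 -> forall l, loading w l = 0.
Proof.
move=> /psumr_eq0P zero l; apply/eqP; rewrite -sqrf_eq0; apply/eqP.
by apply: zero => // i _; apply: sqr_ge0.
Qed.

Lemma gls_weight_of_lin_var_eq0 w :
  unbiased h w -> lin_var A w = 0 -> gls_weight h A w.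
Proof. by move=> hw w0; split=> // w' _; rewrite w0 lin_var_ge0. Qed.

Lemma gls_weight_of_normal_eq w lambda :
  unbiased h w -> (forall k, \sum_(l < m) A k l * loading w l = lambda * h k) ->
  gls_weight h A w.
Proof.
move=> hw normal; split=> // w' hw'.
pose d k := w' k - w k.
have loading_w' l : loading w' l = loading w l + loading d l.
  by rewrite /loading -big_split; apply: eq_bigr => k _ /=; rewrite /d; ring.
have cross : \sum_(l < m) loading w l * loading d l = 0.
  transitivity (\sum_(k < n) d k * (lambda * h k)).
    under eq_bigr do rewrite mulr_sumr.
    rewrite exchange_big; apply: eq_bigr => k _.
    by rewrite -normal mulr_sumr; apply: eq_bigr => l _; ring.
  transitivity (lambda * (\sum_(k < n) w' k * h k - \sum_(k < n) w k * h k)).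
    by rewrite -sumrB mulr_sumr; apply: eq_bigr => k _; rewrite /d; ring.
  by rewrite hw' hw subrr mulr0.
have -> : lin_var A w' = lin_var A w
    + (2 * \sum_(l < m) loading w l * loading d l + lin_var A d).
  rewrite mulr_sumr -big_split -big_split; apply: eq_bigr => l _ /=.
  by rewrite -/(loading w l) -/(loading d l) -/(loading w' l) loading_w'; ring.
by rewrite cross mulr0 add0r lerDl lin_var_ge0.
Qed.

Lemma post_var_gt0 v :
  (forall w, unbiased h w -> lin_var A w != 0) -> post_var h A v -> 0 < v.
Proof.
by move=> noisy [w [[hw _] ->]]; rewrite lt_def noisy // lin_var_ge0.
Qed.

Section ExactInference.
Hypothesis exact : exists w, unbiased h w /\ lin_var A w = 0.

Lemma lin_var_gls_weight_exact w : gls_weight h A w -> lin_var A w = 0.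
Proof.
have [w0 [hw0 zero]] := exact; move=> [_ min_w].
by apply/eqP; rewrite eq_le lin_var_ge0 andbT -zero min_w.
Qed.

Lemma post_var_exact : post_var h A 0 /\ (forall v, post_var h A v -> v = 0).
Proof.
have [w0 [hw0 zero]] := exact.
split; first by exists w0; split=> //; exact: gls_weight_of_lin_var_eq0.
by move=> v [w [gw ->]]; apply: lin_var_gls_weight_exact.
Qed.

Lemma post_mean_exact {theta : R} {z : 'I_m -> R} {d s : 'I_n -> R} :
  (forall k, s k = h k * theta + d k + \sum_(l < m) A k l * z l) ->
  (exists mu, post_mean h A d s mu) /\
  (forall mu, post_mean h A d s mu -> mu = theta).
Proof.
move=> signal.
have mean_w w : gls_weight h A w -> \sum_(k < n) w k * (s k - d k) = theta.
  move=> gw; have [hw _] := gw.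
  have /lin_var_gls_weight_exact/loading_of_lin_var_eq0 zero_loading := gw.
  transitivity (theta * \sum_(k < n) w k * h k
                + \sum_(l < m) z l * loading w l).
    rewrite (eq_bigr (fun l => \sum_(k < n) z l * (w k * A k l))); last first.
      by move=> l _; rewrite mulr_sumr.
    rewrite exchange_big mulr_sumr -big_split; apply: eq_bigr => k _ /=.
    have -> : \sum_(l < m) z l * (w k * A k l) = w k * \sum_(l < m) A k l * z l.
      by rewrite mulr_sumr; apply: eq_bigr => l _; ring.
    by rewrite signal; ring.
  by rewrite hw big1 ?addr0 ?mulr1 // => l _; rewrite zero_loading mulr0.
have [w0 [hw0 zero]] := exact.
have gw0 := gls_weight_of_lin_var_eq0 w0 hw0 zero.
split; first by exists theta, w0; rewrite (mean_w w0 gw0).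
by move=> mu [w [gw ->]]; apply: mean_w.
Qed.

End ExactInference.
End GLSTheory.

Section PublishingTrader.
Context {R : realFieldType} (sx b : R).
Hypothesis sx_neq_b : sx - b != 0.

Lemma exact_weight_j : exists w : 'I_2 -> R,
  unbiased (vec [:: 1; 1]) w /\
  lin_var (mat [:: [:: sx]; [:: b]] : 'I_2 -> 'I_1 -> R) w = 0.
Proof.
exists (vec [:: - b / (sx - b); sx / (sx - b)]).
split; first by rewrite /unbiased !big_ord_recl big_ord0 /vec /=; field.
rewrite /lin_var big_ord1 !big_ord_recl big_ord0 /vec /mat /=.
by apply/eqP; rewrite addr0 sqrf_eq0; apply/eqP; field.
Qed.

Lemma signal_j (theta eps c : R) (k : 'I_2) :
  vec [:: theta + sx * eps; theta + b * eps + c] k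
  = vec [:: 1; 1] k * theta + vec [:: 0; c] k
    + \sum_(l < 1) mat [:: [:: sx]; [:: b]] k l * vec [:: eps] l :> R.
Proof.
by rewrite big_ord1; case: k => -[|[|//]] ?; rewrite /vec /mat /=; ring.
Qed.

End PublishingTrader.

Section OtherTrader.
Context {R : realFieldType} (sx sy b : R).
Hypotheses (sx_gt0 : 0 < sx) (sy_gt0 : 0 < sy) (b_gt0 : 0 < b).

Let hi : 'I_3 -> R := vec [:: 1; 1; 1].
Let Ai : 'I_3 -> 'I_3 -> R :=
  mat [:: [:: sx; 0; 0]; [:: 0; sx; sy]; [:: 0; b; 0]].

Lemma lin_var_i_neq0 w : unbiased hi w -> lin_var Ai w != 0.
Proof.
rewrite /unbiased /hi !big_ord_recl big_ord0 /vec /= !mulr1 addr0.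
set w0 := w _; set w1 := w _; set w2 := w _ => hw.
apply/eqP => /loading_of_lin_var_eq0 zero.
have := zero ord0; have := zero (lift ord0 ord0).
have := zero (lift ord0 (lift ord0 ord0)).
rewrite /loading /Ai /mat !big_ord_recl !big_ord0 /= -/w0 -/w1 -/w2.
rewrite !mulr0 !add0r !addr0 => /eqP.
rewrite mulf_eq0 (gt_eqF sy_gt0) orbF => /eqP w1_0.
rewrite w1_0 mul0r add0r => /eqP; rewrite mulf_eq0 (gt_eqF b_gt0) orbF.
move=> /eqP w2_0 /eqP; rewrite mulf_eq0 (gt_eqF sx_gt0) orbF => /eqP w0_0.
by move: hw; rewrite w0_0 w1_0 w2_0 !add0r => /eqP; rewrite eq_sym oner_eq0.
Qed.

(* The equilibrium coefficient b is exactly what makes the GLS weight of x_i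
   and y_i opposite, with P getting weight 1. *)
Lemma gls_weight_i : b * (sx ^+ 2 + sy ^+ 2) = sx ^+ 3 ->
  let t := b ^+ 2 / (sx * (sx + b)) in gls_weight hi Ai (vec [:: t; - t; 1]).
Proof.
move=> b_eq t.
have sx_neq0 : sx != 0 by rewrite gt_eqF.
have sxb_neq0 : sx + b != 0 by rewrite gt_eqF // addr_gt0.
apply: (@gls_weight_of_normal_eq _ _ _ _ _ _ (sx ^+ 2 * t)).
  by rewrite /unbiased /hi /vec !big_ord_recl big_ord0 /=; ring.
move=> k; rewrite /loading /Ai /hi /mat /vec !big_ord_recl !big_ord0 /=.
case: k => -[|[|[|//]]] ? /=; rewrite /t.
- by field; rewrite sxb_neq0 sx_neq0.
- apply/eqP; rewrite -subr_eq0; apply/eqP.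
  transitivity (b / (sx * (sx + b)) * (sx ^+ 3 - b * (sx ^+ 2 + sy ^+ 2))).
    by field; rewrite sxb_neq0 sx_neq0.
  by rewrite b_eq subrr mulr0.
- by field; rewrite sxb_neq0 sx_neq0.
Qed.

End OtherTrader.

Theorem proposition4 (R : realFieldType) (sx sy seta gamma c : R) :
  0 < sx -> 0 < sy -> 0 < seta -> 0 < gamma ->
  let b := sx ^+ 3 / (sx ^+ 2 + sy ^+ 2) in
  let hj : 'I_2 -> R := vec [:: 1; 1] in
  let Aj : 'I_2 -> 'I_1 -> R := mat [:: [:: sx]; [:: b]] in
  let dj : 'I_2 -> R := vec [:: 0; c] in
  let hi : 'I_3 -> R := vec [:: 1; 1; 1] in
  let Ai : 'I_3 -> 'I_3 -> R :=
    mat [:: [:: sx; 0; 0]; [:: 0; sx; sy]; [:: 0; b; 0]] in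
  [/\ sx - b = sx * sy ^+ 2 / (sx ^+ 2 + sy ^+ 2), 0 < sx - b,
      (forall theta eps : R,
         let xj := theta + sx * eps in
         let P := theta + b * eps + c in
         let sj : 'I_2 -> R := vec [:: xj; P] in
         [/\ theta = (sx * (P - c) - b * xj) / (sx - b),
             post_var hj Aj 0 /\ (forall v, post_var hj Aj v -> v = 0),
             (exists mu, post_mean hj Aj dj sj mu),
             (forall mu, post_mean hj Aj dj sj mu -> mu = theta) &
             (forall mu v, post_mean hj Aj dj sj mu -> post_var hj Aj v ->
                cara_demand gamma seta mu v P
                = (theta - P) / (gamma * seta ^+ 2))]),
      (exists v, post_var hi Ai v) &
      (forall v, post_var hi Ai v -> 0 < v)].
Proof.
move=> sx_gt0 sy_gt0 _ _ b hj Aj dj hi Ai.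
have D_gt0 : 0 < sx ^+ 2 + sy ^+ 2 by rewrite addr_gt0 ?exprn_gt0.
have sx_sub_b : sx - b = sx * sy ^+ 2 / (sx ^+ 2 + sy ^+ 2).
  by rewrite /b; field; rewrite gt_eqF.
have sx_sub_b_gt0 : 0 < sx - b.
  by rewrite sx_sub_b divr_gt0 ?mulr_gt0 ?exprn_gt0.
have b_gt0 : 0 < b by rewrite divr_gt0 ?exprn_gt0.
have b_eq : b * (sx ^+ 2 + sy ^+ 2) = sx ^+ 3.
  by rewrite /b; field; rewrite gt_eqF.
have exact_j := exact_weight_j sx b (lt0r_neq0 sx_sub_b_gt0).
have [var_j0 var_j] := post_var_exact exact_j.
split=> //.
- move=> theta eps xj P sj.
  have [mean_ex mean_j] := post_mean_exact exact_j (signal_j sx b theta eps c).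
  split=> //.
  + by rewrite /P /xj; field; rewrite lt0r_neq0.
  + by move=> mu v /mean_j -> /var_j ->; rewrite /cara_demand add0r.
- pose t := b ^+ 2 / (sx * (sx + b)); pose w : 'I_3 -> R := vec [:: t; - t; 1].
  by exists (lin_var Ai w), w; split; first exact: gls_weight_i.
- by move=> v; apply: post_var_gt0; apply: lin_var_i_neq0.
Qed.
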